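(* Let $(X,c)$ be a finite metric space with $n$ points and let $1\le k\le n$. For every execution of the Reverse Greedy algorithm (with arbitrary tie-breaking), the set $R_k$ it produces satisfies $$\mathrm{cost}(R_k) \;\le\; 2H_{n-k}\cdot \min_{F\subseteq X,\ |F|=k}\mathrm{cost}(F),$$ where $H_m = \sum_{i=1}^m 1/i$ is the $m$-th harmonic number ($H_0=0$). In particular, the approximation ratio of Reverse Greedy for the metric $k$-median problem is $O(\log n)$.
   Context: For $x\in X$ and nonempty $F\subseteq X$, $c_{xF}=\min_{f\in F}c_{xf}$, and $\mathrm{cost}(F)=\sum_{x\in X} c_{xF}$. The Reverse Greedy algorithm on an $n$-point space $X$: set $R_n = X$; for $t = n, n-1,\dots,2$, set $R_{t-1} = R_t\setminus\{r_t\}$ where $r_t\in R_t$ is chosen (ties broken arbitrarily) to minimize $\mathrm{cost}(R_{t-1})$. *)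

From mathcomp Require Import all_boot all_order all_algebra.
Set Implicit Arguments. Unset Strict Implicit. Unset Printing Implicit Defensive.
Import Order.TTheory GRing.Theory Num.Theory.
Local Open Scope ring_scope.

Definition is_metric {R : realDomainType} {T : finType} (c : T -> T -> R) : Prop :=
  [/\ (forall x y, 0 <= c x y),
      (forall x y, c x y = 0 <-> x = y),
      (forall x y, c x y = c y x)
    & (forall x y z, c x z <= c x y + c y z)].

(* The default value of the iterated min is
   the maximal distance from x, which is >= every c x f for a metric, so for
   nonempty F this is exactly the minimum (only used on nonempty F). *)
Definition distF {R : realDomainType} {T : finType} (c : T -> T -> R)
  (x : T) (F : {set T}) : R :=
  \big[Order.min/ \big[Order.max/0]_(y : T) c x y]_(f in F) c x f.

Definition cost {R : realDomainType} {T : finType} (c : T -> T -> R)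
  (F : {set T}) : R := \sum_(x : T) distF c x F.

Definition harmonic {R : realFieldType} (m : nat) : R :=
  \sum_(1 <= i < m.+1) (i%:R)^-1.

Definition reverse_greedy_run {R : realDomainType} {T : finType}
  (c : T -> T -> R) (Rs : nat -> {set T}) : Prop :=
  Rs #|T| = [set: T] /\
  forall t : nat, (2 <= t <= #|T|)%N ->
    exists2 r, r \in Rs t &
      Rs t.-1 = Rs t :\ r /\
      forall r', r' \in Rs t -> cost c (Rs t :\ r) <= cost c (Rs t :\ r').

(* Fix an optimal-size competitor F with |F| = k and a current solution S with
   |S| = t > k.  Send every facility of F to its nearest point of S; at least
   t - k points r of S are hit by nobody.  Closing such an r only hurts the
   clients x whose nearest point in S is r, and each of them can be rerouted,
   through its nearest facility f of F, to the point of S nearest to f, at an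
   extra cost of at most 2 c(x,F).  Summing over the unhit r, the total increase
   of the cost is at most 2 cost(F), so the greedy (cheapest) removal increases
   the cost by at most 2 cost(F) / (t - k).  Telescoping from S = X (cost 0)
   down to t = k gives the bound 2 H_{n-k} cost(F). *)
From mathcomp Require Import all_boot all_order all_algebra.
From mathcomp Require Import ring lra zify.
Import Order.TTheory GRing.Theory Num.Theory.
Local Open Scope ring_scope.
Set Implicit Arguments.
Unset Strict Implicit.
Unset Printing Implicit Defensive.

Section DistanceToSet.
Variables (R : realDomainType) (T : finType) (c : T -> T -> R).

Lemma distF_le x (F : {set T}) f : f \in F -> distF c x F <= c x f.
Proof. by move=> fF; rewrite /distF (bigD1 f) //= ge_min lexx. Qed.

Lemma distF_attained x (F : {set T}) f0 : f0 \in F ->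
  exists2 f, f \in F & distF c x F = c x f.
Proof.
move=> f0F.
have [//|dflt] : (exists2 f, f \in F & distF c x F = c x f) \/
                 distF c x F = \big[Order.max/0]_(y : T) c x y.
  rewrite /distF; apply: (big_ind (fun v => (exists2 f, f \in F & v = c x f) \/
                                    v = \big[Order.max/0]_(y : T) c x y)).
  - by right.
  - by move=> a b; rewrite minEle; case: ifP.
  - by move=> f fF; left; exists f.
exists f0 => //; apply/eqP; rewrite eq_le distF_le //=.
by rewrite dflt le_bigmax.
Qed.

Lemma nearest_selector (A : {set T}) a : a \in A ->
  exists near : T -> T, forall x, near x \in A /\ distF c x A = c x (near x).
Proof.
move=> aA; apply: (@fin_all_exists _ (fun=> T)
  (fun x y => y \in A /\ distF c x A = c x y)) => x.
by have [f ? ?] := distF_attained x aA; exists f.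
Qed.

Lemma distF_ge0 x (F : {set T}) : (forall y z, 0 <= c y z) -> 0 <= distF c x F.
Proof.
move=> c_ge0; rewrite /distF; apply: (big_ind (fun v => 0 <= v)) => // [|a b].
  by apply: (big_ind (fun v => 0 <= v)) => // a b; rewrite le_max => ->.
by rewrite minEle; case: ifP.
Qed.

Lemma distF_subset x (A B : {set T}) a : a \in A -> A \subset B ->
  distF c x B <= distF c x A.
Proof.
move=> aA sAB; have [f fA ->] := distF_attained x aA.
exact/distF_le/(subsetP sAB).
Qed.

Lemma cost_subset (A B : {set T}) a : a \in A -> A \subset B ->
  cost c B <= cost c A.
Proof. by move=> aA sAB; apply: ler_sum => x _; apply: distF_subset aA sAB. Qed.

Lemma cost_setT : is_metric c -> cost c [set: T] = 0.
Proof.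
case=> c_ge0 c_eq0 _ _; rewrite /cost big1 // => x _.
apply/eqP; rewrite eq_le distF_ge0 //.
by rewrite (le_trans (distF_le x (in_setT x))) // (proj2 (c_eq0 x x)).
Qed.

End DistanceToSet.

Section RemovalExchange.
Variables (R : realDomainType) (T : finType) (c : T -> T -> R).
Hypothesis c_metric : is_metric c.
Variables (S F : {set T}) (nearS nearF : T -> T).
Hypothesis nearS_in : forall x, nearS x \in S.
Hypothesis nearS_dist : forall x, distF c x S = c x (nearS x).
Hypothesis nearF_in : forall x, nearF x \in F.
Hypothesis nearF_dist : forall x, distF c x F = c x (nearF x).

Let unhit := S :\: nearS @: F.

Lemma card_unhit : (#|S| - #|F| <= #|unhit|)%N.
Proof.
have hitS : nearS @: F \subset S by apply/subsetP => _ /imsetP [f _ ->].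
by rewrite cardsDS // leq_sub2l // leq_imset_card.
Qed.

Lemma distF_remove_far x r : nearS x != r -> distF c x (S :\ r) <= distF c x S.
Proof. by move=> xr; rewrite nearS_dist distF_le // !inE xr nearS_in. Qed.

Lemma distF_remove_unhit x : nearS x \in unhit ->
  distF c x (S :\ nearS x) <= distF c x S + 2 * distF c x F.
Proof.
have [c_ge0 _ c_sym c_tri] := c_metric.
move=> unhit_x; pose r := nearS x; pose f := nearF x; pose s := nearS f.
have s_alive : s \in S :\ r.
  rewrite !inE nearS_in andbT; apply: contraTneq unhit_x => s_r.
  by rewrite /unhit !inE -/r -s_r imset_f ?nearF_in.
have reroute : distF c x (S :\ r) <= c x s by apply: distF_le.
have fs_fr : c f s <= c f r by rewrite -nearS_dist distF_le ?nearS_in.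
have := c_tri x f s; have := c_tri f x r; have := c_sym f x.
rewrite nearS_dist nearF_dist -/r -/f; lra.
Qed.

Lemma sum_distF_remove_unhit x :
  \sum_(r in unhit) (distF c x (S :\ r) - distF c x S) <= 2 * distF c x F.
Proof.
have [c_ge0 _ _ _] := c_metric.
have far_le0 r : nearS x != r -> distF c x (S :\ r) - distF c x S <= 0.
  by move=> xr; rewrite subr_le0 distF_remove_far.
have [unhit_x | hit_x] := boolP (nearS x \in unhit).
  rewrite (bigD1 (nearS x)) //= -[X in _ <= X]addr0 lerD //.
    by rewrite lerBlDl distF_remove_unhit.
  by apply: sumr_le0 => r /andP [_ rx]; rewrite far_le0 // eq_sym.
apply: (@le_trans _ _ 0); last by rewrite mulr_ge0 ?distF_ge0.
by apply: sumr_le0 => r r_unhit; apply: far_le0; apply: contraNneq hit_x => ->.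
Qed.

Lemma sum_cost_remove_unhit :
  \sum_(r in unhit) (cost c (S :\ r) - cost c S) <= 2 * cost c F.
Proof.
rewrite /cost; under eq_bigr do rewrite -sumrB.
rewrite exchange_big /= mulr_sumr; apply: ler_sum => x _.
exact: sum_distF_remove_unhit.
Qed.

End RemovalExchange.

Section GreedyRemoval.
Variables (R : realDomainType) (T : finType) (c : T -> T -> R).
Hypothesis c_metric : is_metric c.

Lemma greedy_removal_le (S F : {set T}) r0 : r0 \in S ->
  (forall r, r \in S -> cost c (S :\ r0) <= cost c (S :\ r)) ->
  (0 < #|F| < #|S|)%N ->
  (#|S| - #|F|)%:R * (cost c (S :\ r0) - cost c S) <= 2 * cost c F.
Proof.
move=> r0S r0_min /andP [F_gt0 ltFS]; have /card_gt0P [f0 f0F] := F_gt0.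
have [nearS nearSP] := nearest_selector c r0S.
have [nearF nearFP] := nearest_selector c f0F.
have nearS_in x := (nearSP x).1; have nearS_dist x := (nearSP x).2.
have nearF_in x := (nearFP x).1; have nearF_dist x := (nearFP x).2.
set unhit := S :\: nearS @: F.
have increase_ge0 : 0 <= cost c (S :\ r0) - cost c S.
  have [a aS] : exists a, a \in S :\ r0.
    apply/card_gt0P; move: (cardsD1 r0 S); rewrite r0S; lia.
  by rewrite subr_ge0; apply: cost_subset aS (subsetDl _ _).
apply: le_trans (sum_cost_remove_unhit c_metric nearS_in nearS_dist nearF_in nearF_dist).
apply: (@le_trans _ _ (\sum_(r in unhit) (cost c (S :\ r0) - cost c S))).
  rewrite sumr_const -[X in _ <= X]mulr_natl ler_wpM2r // ler_nat.
  exact: card_unhit.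
by apply: ler_sum => r; rewrite !inE => /andP [_ rS]; rewrite lerD2r r0_min.
Qed.

End GreedyRemoval.

Lemma harmonic_shift (R : realFieldType) (k n : nat) : (k <= n)%N ->
  harmonic (R := R) (n - k) = \sum_(k <= t < n) ((t.+1 - k)%:R)^-1.
Proof.
move=> kn; rewrite /harmonic big_add1 /= -{2}(add0n k) big_addn.
by apply: eq_bigr => t _; congr (_%:R^-1); lia.
Qed.

Section ReverseGreedyRun.
Variables (R : realFieldType) (T : finType) (c : T -> T -> R).
Variable Rs : nat -> {set T}.
Hypotheses (c_metric : is_metric c) (Rs_run : reverse_greedy_run c Rs).

Lemma card_run t : (1 <= t <= #|T|)%N -> #|Rs t| = t.
Proof.
have [RsT run_step] := Rs_run.
move=> /andP [t1 tn]; rewrite -(subKn tn).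
have : (#|T| - t < #|T|)%N by lia.
elim: (#|T| - t)%N => [|j IH] jn; first by rewrite subn0 RsT cardsT.
have -> : (#|T| - j.+1 = (#|T| - j).-1)%N by lia.
have [|r r_in [-> _]] := run_step (#|T| - j)%N; first lia.
move: (cardsD1 r (Rs (#|T| - j)%N)); rewrite r_in IH; lia.
Qed.

Lemma run_step_le (F : {set T}) t : (0 < #|F| < t)%N -> (t <= #|T|)%N ->
  cost c (Rs t.-1) - cost c (Rs t) <= 2 * cost c F / (t - #|F|)%:R.
Proof.
have [_ run_step] := Rs_run.
move=> /andP [F0 Ft] tn.
have [|r r_in [-> r_min]] := run_step t; first lia.
have card_t : #|Rs t| = t by apply: card_run; lia.
have F_lt : (0 < #|F| < #|Rs t|)%N by rewrite card_t F0.
have := greedy_removal_le c_metric r_in r_min F_lt; rewrite card_t.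
have gap_gt0 : 0 < (t - #|F|)%:R :> R by rewrite ltr0n subn_gt0.
by rewrite ler_pdivlMr // mulrC.
Qed.

End ReverseGreedyRun.

Theorem mainTheorem4 (R : realFieldType) (T : finType) (c : T -> T -> R)
  (Rs : nat -> {set T}) (k : nat) :
  is_metric c ->
  reverse_greedy_run c Rs ->
  (1 <= k <= #|T|)%N ->
  forall F : {set T}, #|F| = k ->
    cost c (Rs k) <= 2 * harmonic (#|T| - k) * cost c F.
Proof.
move=> c_metric run /andP [k1 kn] F cardF.
have telescope : cost c (Rs k) =
    \sum_(k <= t < #|T|) (cost c (Rs t) - cost c (Rs t.+1)).
  rewrite (telescope_sumr_eq (fun t => - cost c (Rs t))) => [|//|t _]; last first.
    by rewrite opprK addrC.
  by rewrite run.1 cost_setT // oppr0 add0r opprK.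
rewrite telescope harmonic_shift // [2 * _]mulr_sumr mulr_suml.
apply: ler_sum_nat => t /andP [kt tn].
have := run_step_le c_metric run (t := t.+1) (F := F); rewrite cardF /=.
by rewrite mulrAC; apply=> //; apply/andP; split; lia.
Qed.
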